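(* Let $\omega\in\{0,\infty\}$ and let $\Gamma_M$ ($M>0$) be a family of nonatomic routing games on a fixed graph with fixed OD pairs $\mathcal I$, path sets and edge costs $(c_e)_{e\in\mathcal E}$, in which OD pair $i$ has demand $m^i=\lambda^iM$ for fixed constants $\lambda^i>0$ with $\sum_i\lambda^i=1$. If every $c_e$ is a polynomial, then $\mathrm{PoA}(\Gamma_M)\to 1$ as $M\to\omega$.
   Context: A nonatomic routing game consists of: a finite directed multigraph with edge set $\mathcal E$; a finite set $\mathcal I$ of OD pairs, each $i$ with demand $m^i\ge 0$ and a nonempty finite set $\mathcal P^i$ of paths from its origin to its destination, the $\mathcal P^i$ pairwise disjoint, $\mathcal P=\bigcup_i\mathcal P^i$; and continuous nondecreasing edge costs $c_e:[0,\infty)\to[0,\infty)$. Total inflow $M=\sum_i m^i>0$. Feasible flows: $f\in\mathbb R_+^{\mathcal P}$ with $\sum_{p\in\mathcal P^i}f_p=m^i$; loads $x_e=\sum_{p\ni e}f_p$; path costs $c_p(f)=\sum_{e\in p}c_e(x_e)$. A Wardrop equilibrium is a feasible $f^*$ with $c_p(f^* )\le c_{p'}(f^* )$ whenever $p,p'\in\mathcal P^i$, $f^*_p>0$. Social cost $L(x)=\sum_e x_ec_e(x_e)$; $\mathrm{Opt}$ its minimum over feasible loads, $\mathrm{Eq}=L(x^* )$ at an equilibrium load, $\mathrm{PoA}=\mathrm{Eq}/\mathrm{Opt}$ (assumed $\mathrm{Opt}>0$; otherwise $\mathrm{PoA}:=1$). *)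

From HB Require Import structures.
From mathcomp Require Import all_boot all_order all_algebra.
From mathcomp Require Import all_classical all_reals all_analysis.
Set Implicit Arguments. Unset Strict Implicit. Unset Printing Implicit Defensive.
Import Order.TTheory GRing.Theory Num.Theory.
Import numFieldNormedType.Exports.
Local Open Scope classical_set_scope.
Local Open Scope ring_scope.

Section Routing.
Variables (R : realType) (V E : finType) (src tgt : E -> V).

Definition is_simple_path (o d : V) (s : seq E) : bool :=
  match s with
  | [::] => false
  | e0 :: _ =>
      [&& src e0 == o,
          path (fun e e' => tgt e == src e') e0 (behead s),
          tgt (last e0 s) == d
        & uniq (o :: map tgt s)]
  end.

Variables (I P : finType) (od : P -> I) (path_of : P -> seq E)
          (c : E -> {poly R}).

Definition load (f : P -> R) (e : E) : R :=
  \sum_(p : P | e \in path_of p) f p.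

Definition path_cost (f : P -> R) (p : P) : R :=
  \sum_(e <- path_of p) (c e).[load f e].

Definition feasible (m : I -> R) (f : P -> R) : Prop :=
  (forall p, 0 <= f p) /\ (forall i, \sum_(p : P | od p == i) f p = m i).

Definition wardrop (m : I -> R) (f : P -> R) : Prop :=
  feasible m f /\
  (forall p p', od p = od p' -> 0 < f p -> path_cost f p <= path_cost f p').

Definition social_cost (f : P -> R) : R :=
  \sum_(e : E) load f e * (c e).[load f e].

Definition Opt (m : I -> R) : R :=
  inf [set social_cost f | f in [set f | feasible m f]].

Definition PoA (m : I -> R) (feq : P -> R) : R :=
  if 0 < Opt m then social_cost feq / Opt m else 1.

End Routing.

From HB Require Import structures.
From mathcomp Require Import all_boot all_order all_algebra.
From mathcomp Require Import all_classical all_reals all_analysis.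
From mathcomp Require Import ring lra zify.
Import Order.TTheory GRing.Theory Num.Theory.
Import numFieldNormedType.Exports.
Local Open Scope classical_set_scope.
Local Open Scope ring_scope.
Set Implicit Arguments. Unset Strict Implicit. Unset Printing Implicit Defensive.

(* As M tends to 0 or to +oo, every edge cost is, on loads of order M, either
   a_e x^k + o(M^k) with a_e > 0, or o(M^k), or larger than any multiple of M^k
   ("steep"), where k is fixed by the least growth (degree at +oo, order of
   vanishing at 0) that still lets every OD pair avoid steep edges.  Equilibrium
   and optimal costs are then both of exact order M^(k+1), and up to o(M^(k+1))
   the game has the homogeneous costs a_e x^k.  For those, the variational
   inequality sum_e y_e c_e(y_e) <= sum_e z_e c_e(y_e) of an equilibrium y and
   Young's inequality (k+1) z y^k <= z^(k+1) + k y^(k+1) show that y is optimal;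
   carried out with the error terms, and after rerouting the flow that z puts on
   steep paths (or noting it alone costs more than y), this gives
   L(y) <= L(z) + o(M^(k+1)), hence PoA -> 1.  If some routing uses only edges of
   zero cost, Opt = 0 and PoA = 1 by definition. *)

Section PolyAsymptotics.
Variable R : realType.
Implicit Types (p : {poly R}) (x M eta : R).

Definition abs_coef_sum p := \sum_(i < size p) `|p`_i|.

Lemma abs_coef_sum_ge0 p : 0 <= abs_coef_sum p.
Proof. exact: sumr_ge0. Qed.

Lemma norm_horner_le_high p k x M : (size p <= k)%N -> 0 <= x -> x <= M -> 1 <= M ->
  `|p.[x]| * M <= abs_coef_sum p * M ^+ k.
Proof.
move=> sk x0 xM M1; have M0 : 0 <= M := le_trans ler01 M1.
rewrite horner_coef /abs_coef_sum !mulr_suml.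
apply: le_trans (ler_wpM2r M0 (ler_norm_sum _ _ _)) _.
rewrite mulr_suml; apply: ler_sum => i _.
rewrite normrM normrX (ger0_norm x0) -mulrA; apply: ler_wpM2l => //.
apply: (@le_trans _ _ (M ^+ i * M)); first by rewrite ler_wpM2r ?lerXn2r ?nnegrE.
by rewrite -exprSr ler_weXn2l // (leq_trans _ sk).
Qed.

Lemma norm_horner_le_low p k x : (forall j, (j < k)%N -> p`_j = 0) ->
  0 <= x -> x <= 1 -> `|p.[x]| <= abs_coef_sum p * x ^+ k.
Proof.
move=> pk x0 x1; rewrite horner_coef /abs_coef_sum mulr_suml.
apply: le_trans (ler_norm_sum _ _ _) _; apply: ler_sum => i _.
rewrite normrM normrX (ger0_norm x0).
have [ik|ki] := ltnP i k; first by rewrite pk // normr0 !mul0r.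
by rewrite ler_wpM2l // ler_wiXn2l.
Qed.

Lemma horner_small_pinfty p k eta : (size p <= k)%N -> 0 < eta ->
  \forall M \near +oo, forall x, 0 <= x -> x <= M -> `|p.[x]| <= eta * M ^+ k.
Proof.
move=> sk eta0; near=> M => x x0 xM.
have M1 : 1 <= M by near: M; exact: nbhs_pinfty_ge.
have M0 : 0 < M := lt_le_trans ltr01 M1.
have SM : abs_coef_sum p <= eta * M.
  by rewrite -ler_pdivrMl //; near: M; exact: nbhs_pinfty_ge.
rewrite -(ler_pM2r M0); apply: le_trans (norm_horner_le_high sk x0 xM M1) _.
by rewrite mulrAC ler_wpM2r // exprn_ge0 ?ltW.
Unshelve. all: by end_near.
Qed.

Lemma horner_small_0 p k eta : (forall j, (j < k.+1)%N -> p`_j = 0) -> 0 < eta ->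
  \forall M \near 0^'+, forall x, 0 <= x -> x <= M -> `|p.[x]| <= eta * M ^+ k.
Proof.
move=> pk eta0; have S0 := abs_coef_sum_ge0 p.
near=> M => x x0 xM.
have M0 : 0 < M by near: M; exact: nbhs_right_gt.
have M1 : M <= 1 by near: M; exact: nbhs_right_le.
have SM : abs_coef_sum p * M <= eta.
  have : M < eta / (abs_coef_sum p + 1).
    by near: M; apply: nbhs_right_lt; rewrite divr_gt0 // ltr_wpDl.
  rewrite ltr_pdivlMr ?ltr_wpDl //; nra.
apply: le_trans (norm_horner_le_low pk x0 (le_trans xM M1)) _.
apply: (@le_trans _ _ (abs_coef_sum p * M ^+ k.+1)).
  by apply: ler_wpM2l => //; apply: lerXn2r; rewrite ?nnegrE // ltW.
by rewrite exprS mulrA ler_wpM2r // exprn_ge0 ?ltW.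
Unshelve. all: by end_near.
Qed.


Lemma size_sub_lead p k : size p = k.+1 -> (size (p - lead_coef p *: 'X^k)%R <= k)%N.
Proof.
move=> sp; apply/leq_sizeP => j kj; rewrite coefB coefZ coefXn.
have [->|jk] := eqVneq j k; first by rewrite lead_coefE sp mulr1 subrr.
by rewrite mulr0 subr0 nth_default // sp ltn_neqAle eq_sym jk.
Qed.

Lemma coef_sub_low p k : (forall j, (j < k)%N -> p`_j = 0) ->
  forall j, (j < k.+1)%N -> (p - p`_k *: 'X^k)`_j = 0.
Proof.
move=> pk j jk; rewrite coefB coefZ coefXn.
have [->|jnk] := eqVneq j k; first by rewrite mulr1 subrr.
by rewrite mulr0 subr0 pk // ltn_neqAle jnk -ltnS.
Qed.

Lemma horner_near_lead_pinfty p k eta : size p = k.+1 -> 0 < eta ->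
  \forall M \near +oo, forall x, 0 <= x -> x <= M ->
    `|p.[x] - lead_coef p * x ^+ k| <= eta * M ^+ k.
Proof.
move=> sp eta0; apply: filterS (horner_small_pinfty (size_sub_lead sp) eta0).
by move=> M + x x0 xM => /(_ x x0 xM); rewrite hornerD hornerN hornerZ hornerXn.
Qed.

Lemma horner_near_low_0 p k eta : (forall j, (j < k)%N -> p`_j = 0) -> 0 < eta ->
  \forall M \near 0^'+, forall x, 0 <= x -> x <= M ->
    `|p.[x] - p`_k * x ^+ k| <= eta * M ^+ k.
Proof.
move=> pk eta0; apply: filterS (horner_small_0 (coef_sub_low pk) eta0).
by move=> M + x x0 xM => /(_ x x0 xM); rewrite hornerD hornerN hornerZ hornerXn.
Qed.

Lemma expr_gap_pinfty k s (K b : R) : (k < s)%N -> 0 < b ->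
  \forall M \near +oo, K * M ^+ k <= b * M ^+ s.
Proof.
move=> ks b0; near=> M.
have M1 : 1 <= M by near: M; exact: nbhs_pinfty_ge.
have M0 : 0 <= M := le_trans ler01 M1.
have KM : `|K| <= b * M by rewrite -ler_pdivrMl //; near: M; exact: nbhs_pinfty_ge.
apply: (@le_trans _ _ (`|K| * M ^+ k)); first by rewrite ler_wpM2r ?exprn_ge0 ?ler_norm.
apply: (@le_trans _ _ (b * M * M ^+ k)); first by rewrite ler_wpM2r ?exprn_ge0.
rewrite -mulrA -exprS; apply: ler_wpM2l; [exact: ltW | exact: ler_weXn2l].
Unshelve. all: by end_near.
Qed.

Lemma expr_gap_0 k s (K b : R) : (s < k)%N -> 0 < b ->
  \forall M \near 0^'+, K * M ^+ k <= b * M ^+ s.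
Proof.
move=> sk b0; near=> M.
have M0 : 0 < M by near: M; exact: nbhs_right_gt.
have M1 : M <= 1 by near: M; exact: nbhs_right_le.
have KM : `|K| * M <= b.
  have : M < b / (`|K| + 1) by near: M; apply: nbhs_right_lt; rewrite divr_gt0 // ltr_wpDl.
  rewrite ltr_pdivlMr ?ltr_wpDl //; lra.
have Ms0 : 0 <= M ^+ s := exprn_ge0 s (ltW M0).
apply: (@le_trans _ _ (`|K| * M ^+ k)).
  by apply: ler_wpM2r; [exact: exprn_ge0 (ltW M0) | exact: ler_norm].
apply: (@le_trans _ _ (`|K| * M * M ^+ s)); last exact: ler_wpM2r.
rewrite -mulrA -exprS; apply: ler_wpM2l => //; exact: ler_wiXn2l (ltW M0) M1 _ _ sk.
Unshelve. all: by end_near.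
Qed.

End PolyAsymptotics.

Section NearMonomial.
Variables (R : realType) (F : set_system R) (p : {poly R}) (a : R) (s : nat).
Hypothesis near_monomial : forall eta, 0 < eta ->
  \forall M \near F, forall x, 0 <= x -> x <= M -> `|p.[x] - a * x ^+ s| <= eta * M ^+ s.

Lemma near_monomial_coef_gt0 {FF : ProperFilter F} : (\forall M \near F, 0 < M) ->
  a != 0 -> (forall x, 0 <= x -> 0 <= p.[x]) -> 0 < a.
Proof.
move=> F0 a0 pge; rewrite lt_neqAle eq_sym a0 /= leNgt; apply/negP => aneg.
have eta0 : 0 < - a / 2 by rewrite divr_gt0 // oppr_gt0.
have [M [M0 /(_ M (ltW M0) (lexx M))]] := filter_ex (filterI F0 (near_monomial eta0)).
rewrite ler_norml => /andP[_ hM].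
have aMs : a * M ^+ s < 0 by rewrite pmulr_llt0 // exprn_gt0.
have := pge M (ltW M0); lra.
Qed.

Lemma near_monomial_horner_ge {FF : Filter F} k d K : 0 < a -> 0 < d -> d <= 1 ->
  (\forall M \near F, 0 < M) ->
  (forall b, 0 < b -> \forall M \near F, K * M ^+ k <= b * M ^+ s) ->
  \forall M \near F, K * M ^+ k <= p.[d * M].
Proof.
move=> a0 d0 d1 F0 gap.
have b0 : 0 < a * d ^+ s / 2 by rewrite divr_gt0 // mulr_gt0 // exprn_gt0.
near=> M.
have M0 : 0 < M by near: M.
have dM0 : 0 <= d * M by rewrite mulr_ge0 ?ltW.
have dMM : d * M <= M := ler_piMl (ltW M0) d1.
have /(_ (d * M) dM0 dMM) : forall x, 0 <= x -> x <= M ->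
    `|p.[x] - a * x ^+ s| <= a * d ^+ s / 2 * M ^+ s by near: M; exact: near_monomial.
rewrite ler_norml exprMn => /andP[hl _].
have : K * M ^+ k <= a * d ^+ s / 2 * M ^+ s by near: M; exact: gap.
lra.
Unshelve. all: by end_near.
Qed.

End NearMonomial.

Section NonnegPoly.
Variable R : realType.
Implicit Types (p : {poly R}).

Definition coef_order p := find (fun x => x != 0) p.

Lemma coef_orderP p : p != 0 -> [/\ p`_(coef_order p) != 0,
  forall j, (j < coef_order p)%N -> p`_j = 0 & (coef_order p < size p)%N].
Proof.
move=> p0; have has_nz : has (fun x => x != 0) p.
  apply/hasP; exists (lead_coef p); last by rewrite lead_coef_eq0.
  by rewrite lead_coefE mem_nth // prednK // size_poly_gt0.
split; [exact: (nth_find 0 has_nz) | | by rewrite -has_find].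
by move=> j jo; apply/eqP/negbFE; exact: (before_find 0 jo).
Qed.

Lemma size_poly_predK p : p != 0 -> size p = (size p).-1.+1.
Proof. by move=> p0; rewrite prednK // size_poly_gt0. Qed.

Lemma lead_coef_gt0_nonneg p : (forall x, 0 <= x -> 0 <= p.[x]) -> p != 0 -> 0 < lead_coef p.
Proof.
move=> pge p0; have near_lead eta := horner_near_lead_pinfty (eta := eta) (size_poly_predK p0).
apply: (near_monomial_coef_gt0 near_lead) => //.
- exact: nbhs_pinfty_gt.
- by rewrite lead_coef_eq0.
Qed.

Lemma coef_order_gt0_nonneg p : (forall x, 0 <= x -> 0 <= p.[x]) -> p != 0 ->
  0 < p`_(coef_order p).
Proof.
move=> pge p0; have [nz low _] := coef_orderP p0.
apply: (near_monomial_coef_gt0 (fun eta => horner_near_low_0 (eta := eta) low)) => //.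
exact: nbhs_right_gt.
Qed.

Lemma horner_ge_pinfty p k d K : (forall x, 0 <= x -> 0 <= p.[x]) -> (k.+1 < size p)%N ->
  0 < d -> d <= 1 -> \forall M \near +oo, K * M ^+ k <= p.[d * M].
Proof.
move=> pge sp d0 d1; have p0 : p != 0 by rewrite -size_poly_gt0 (ltn_trans _ sp).
have near_lead eta := horner_near_lead_pinfty (eta := eta) (size_poly_predK p0).
apply: (near_monomial_horner_ge near_lead) => //.
- exact: lead_coef_gt0_nonneg.
- exact: nbhs_pinfty_gt.
- by move=> b b0; apply: expr_gap_pinfty; rewrite // -ltnS -(size_poly_predK p0).
Qed.

Lemma horner_ge_0 p k d K : (forall x, 0 <= x -> 0 <= p.[x]) -> p != 0 ->
  (coef_order p < k)%N -> 0 < d -> d <= 1 -> \forall M \near 0^'+, K * M ^+ k <= p.[d * M].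
Proof.
move=> pge p0 ok d0 d1; have [nz low _] := coef_orderP p0.
apply: (near_monomial_horner_ge (fun eta => horner_near_low_0 (eta := eta) low)) => //.
- exact: coef_order_gt0_nonneg.
- exact: nbhs_right_gt.
- by move=> b b0; exact: expr_gap_0.
Qed.

End NonnegPoly.

Section PowerInequalities.
Variable R : realType.

Lemma exprS_sub_bounds (x y : R) k : 0 <= y -> y <= x ->
  k.+1%:R * y ^+ k * (x - y) <= x ^+ k.+1 - y ^+ k.+1 <= k.+1%:R * x ^+ k * (x - y).
Proof.
move=> y0 yx; have x0 := le_trans y0 yx.
have cst (z : R) : \sum_(i < k.+1) z ^+ k = k.+1%:R * z ^+ k.
  by rewrite sumr_const card_ord mulr_natl.
have split_pow (z : R) i : (i < k.+1)%N -> z ^+ k = z ^+ (k - i) * z ^+ i.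
  by move=> ik; rewrite -exprD subnK // -ltnS.
rewrite subrXX -!cst !(mulrC _ (x - y)).
have xy0 : 0 <= x - y by rewrite subr_ge0.
apply/andP; split; apply: ler_wpM2l => //; apply: ler_sum => i _.
  rewrite (split_pow y i) //; apply: ler_wpM2r; first exact: exprn_ge0.
  by apply: lerXn2r; rewrite ?nnegrE.
rewrite (split_pow x i) //; apply: ler_wpM2l; first exact: exprn_ge0.
by apply: lerXn2r; rewrite ?nnegrE.
Qed.

Lemma young_exprS (z x : R) k : 0 <= z -> 0 <= x ->
  k.+1%:R * (z * x ^+ k) <= z ^+ k.+1 + k%:R * x ^+ k.+1.
Proof.
move=> z0 x0; have tangent : k.+1%:R * x ^+ k * (z - x) <= z ^+ k.+1 - x ^+ k.+1.
  have [xz|zx] := leP x z; first by case/andP: (exprS_sub_bounds k x0 xz).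
  case/andP: (exprS_sub_bounds k z0 (ltW zx)) => _.
  by rewrite -[z - x]opprB -[z ^+ _ - _]opprB mulrN lerN2.
move: tangent; rewrite [x ^+ k.+1]exprS -[k.+1]addn1 natrD; lra.
Qed.

Lemma exprS_le_increment (z z' M b : R) k : 0 <= z -> 0 <= z' -> z' <= M ->
  0 <= b -> z' <= z + b -> z' ^+ k.+1 <= z ^+ k.+1 + k.+1%:R * M ^+ k * b.
Proof.
move=> z0 z'0 z'M b0 z'zb; have M0 := le_trans z'0 z'M.
have [z'z|zz'] := leP z' z.
  apply: le_trans (_ : z ^+ k.+1 <= _); first by apply: lerXn2r; rewrite ?nnegrE.
  by rewrite lerDl !mulr_ge0 ?exprn_ge0.
rewrite -lerBlDl; case/andP: (exprS_sub_bounds k z0 (ltW zz')) => _ /le_trans; apply.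
apply: ler_pM; rewrite ?subr_ge0 ?mulr_ge0 ?exprn_ge0 ?(ltW zz') //; last by rewrite lerBlDl.
by apply: ler_wpM2l => //; apply: lerXn2r; rewrite ?nnegrE.
Qed.

End PowerInequalities.

Lemma sumr_const_card (R : realType) (T : finType) (t : R) : \sum_(i : T) t = #|T|%:R * t.
Proof. by rewrite sumr_const mulr_natl. Qed.

Lemma exists_ge_average (R : realType) (T : finType) (Q : pred T) (z : T -> R) (s : R) t0 :
  Q t0 -> 0 <= s -> s <= \sum_(t | Q t) z t -> exists2 t, Q t & s / #|T|%:R <= z t.
Proof.
move=> Qt0 s0 sz; have [//|small] := pselect (exists2 t, Q t & s / #|T|%:R <= z t).
have T0 : 0 < #|T|%:R :> R by rewrite ltr0n; apply/card_gt0P; exists t0.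
have sum_le : \sum_(t | Q t) s / #|T|%:R <= s.
  apply: (@le_trans _ _ (\sum_(t : T) s / #|T|%:R)).
    by rewrite [leRHS](bigID Q) /= lerDl; apply: sumr_ge0 => t _; rewrite divr_ge0.
  by rewrite sumr_const_card mulrC divfK ?lt0r_neq0.
have : \sum_(t | Q t) z t < \sum_(t | Q t) s / #|T|%:R.
  apply: ltr_sum; first by apply/hasP; exists t0; rewrite ?mem_index_enum.
  by move=> t Qt; rewrite ltNge; apply/negP => zt; apply: small; exists t.
by move/lt_le_trans/(_ sum_le); rewrite ltNge sz.
Qed.

Section Flows.
Variables (R : realType) (E I P : finType) (od : P -> I) (path_of : P -> seq E)
  (c : E -> {poly R}).
Hypothesis path_uniq : forall p, uniq (path_of p).
Hypothesis cost_ge0 : forall e (x : R), 0 <= x -> 0 <= (c e).[x].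
Hypothesis cost_mono : forall e (x y : R), 0 <= x -> x <= y -> (c e).[x] <= (c e).[y].

Local Notation load := (load path_of).
Local Notation path_cost := (path_cost path_of c).
Local Notation social_cost := (social_cost path_of c).

Lemma sum_load_mul_cost (w y : P -> R) :
  \sum_e load w e * (c e).[load y e] = \sum_p w p * path_cost y p.
Proof.
rewrite /load; under eq_bigr do rewrite mulr_suml.
rewrite (exchange_big_dep xpredT) //=; apply: eq_bigr => p _.
by rewrite /path_cost big_uniq // mulr_sumr; apply: eq_bigr.
Qed.

(* Multiplying the pairing of the equilibrium [y] on OD pair [i] by
   [m i = \sum_q w q] and exchanging sums lets the Wardrop condition
   compare [C p] with [C q] termwise. *)
Lemma wardrop_min_pairing (m : I -> R) (y w C : P -> R) :
  (forall i, 0 < m i) ->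
  (forall p, 0 <= y p) -> (forall i, \sum_(p | od p == i) y p = m i) ->
  (forall p p', od p = od p' -> 0 < y p -> C p <= C p') ->
  (forall p, 0 <= w p) -> (forall i, \sum_(p | od p == i) w p = m i) ->
  \sum_p y p * C p <= \sum_p w p * C p.
Proof.
move=> m0 y0 ysum yW w0 wsum.
rewrite (partition_big od xpredT) //= [leRHS](partition_big od xpredT) //=.
apply: ler_sum => i _; rewrite -(ler_pM2l (m0 i)).
rewrite -{1}(wsum i) -(ysum i) !mulr_suml.
rewrite [leLHS](eq_bigr _ (fun q _ => mulr_sumr _ _ _ _)).
rewrite [leRHS](eq_bigr _ (fun p _ => mulr_sumr _ _ _ _)).
rewrite [leRHS](exchange_big_dep (fun q => od q == i)) //=.
apply: ler_sum => q qi; rewrite [leRHS](eq_bigl (fun p => od p == i)) => [|p]; last first.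
  by rewrite qi andbT.
apply: ler_sum => p pi; move: qi pi => /eqP qi /eqP pi.
have [->|yp] := eqVneq (y p) 0; first by rewrite !mul0r !mulr0.
rewrite mulrCA; apply: ler_wpM2l; first exact: y0.
apply: ler_wpM2l; first exact: w0.
by apply: yW; [rewrite pi qi | rewrite lt0r yp y0].
Qed.

Lemma wardrop_social_cost_le (m : I -> R) (y w : P -> R) : (forall i, 0 < m i) ->
  wardrop od path_of c m y -> feasible od m w ->
  social_cost y <= \sum_e load w e * (c e).[load y e].
Proof.
move=> m0 [[y0 ysum] yW] [w0 wsum]; rewrite /social_cost !sum_load_mul_cost.
exact: wardrop_min_pairing yW w0 wsum.
Qed.

Section NonnegFlow.
Variable f : P -> R.
Hypothesis f_ge0 : forall p, 0 <= f p.

Lemma load_ge0 e : 0 <= load f e.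
Proof. exact: sumr_ge0. Qed.

Lemma flow_le_load p e : e \in path_of p -> f p <= load f e.
Proof. by move=> ep; rewrite /load (bigD1 p) //= lerDl sumr_ge0. Qed.

Lemma load_le_sum e : load f e <= \sum_p f p.
Proof. by rewrite /load [leRHS](bigID (fun p => e \in path_of p)) /= lerDl sumr_ge0. Qed.

Lemma social_cost_ge0 : 0 <= social_cost f.
Proof. by apply: sumr_ge0 => e _; rewrite mulr_ge0 ?cost_ge0 ?load_ge0. Qed.

Lemma social_cost_ge_edge e x : 0 <= x -> x <= load f e -> x * (c e).[x] <= social_cost f.
Proof.
move=> x0 xl; apply: (@le_trans _ _ (load f e * (c e).[load f e])).
  by apply: ler_pM; rewrite ?cost_ge0 ?cost_mono.
rewrite /social_cost (bigD1 e) //= lerDl; apply: sumr_ge0 => e' _.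
by rewrite mulr_ge0 ?cost_ge0 ?load_ge0.
Qed.

Lemma social_cost_ge_share (Q : pred P) (S : pred E) s p0 :
  (forall p, Q p -> exists2 e, e \in path_of p & S e) ->
  Q p0 -> 0 <= s -> s <= \sum_(p | Q p) f p ->
  exists2 e, S e & s / #|P|%:R * (c e).[s / #|P|%:R] <= social_cost f.
Proof.
move=> QS Qp0 s0 sf; have [p Qp fp] := exists_ge_average Qp0 s0 sf.
have [e ep Se] := QS p Qp; exists e => //.
apply: social_cost_ge_edge; first by rewrite divr_ge0.
exact: le_trans fp (flow_le_load ep).
Qed.

End NonnegFlow.

Lemma sum_feasible (m : I -> R) (f : P -> R) : feasible od m f -> \sum_p f p = \sum_i m i.
Proof. by move=> [_ fs]; rewrite (partition_big od xpredT) //=; apply: eq_bigr. Qed.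

Lemma Opt_le (m : I -> R) (z : P -> R) : feasible od m z -> Opt od path_of c m <= social_cost z.
Proof.
move=> zf; apply: ge_inf; last by exists z.
by exists 0 => _ [w wf <-]; exact: social_cost_ge0 wf.1.
Qed.

Lemma Opt_ge (m : I -> R) (z : P -> R) b : feasible od m z ->
  (forall w, feasible od m w -> b <= social_cost w) -> b <= Opt od path_of c m.
Proof.
by move=> zf lb; apply: lb_le_inf => [|_ [w wf <-]]; [exists (social_cost z), z | exact: lb].
Qed.

Section Reroute.
Variables (Bad : pred E) (g : I -> P).
Hypothesis od_g : forall i, od (g i) = i.
Hypothesis g_avoids : forall i e, e \in path_of (g i) -> ~~ Bad e.

Definition bad_path p := has Bad (path_of p).

Definition bad_flow (z : P -> R) i := \sum_(q | bad_path q && (od q == i)) z q.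

Definition reroute (z : P -> R) p :=
  (if bad_path p then 0 else z p) + (if p == g (od p) then bad_flow z (od p) else 0).

Lemma sum_reroute_extra (z : P -> R) i :
  \sum_(p | od p == i) (if p == g (od p) then bad_flow z (od p) else 0) = bad_flow z i.
Proof.
rewrite (bigD1 (g i)) /=; last by rewrite od_g.
rewrite od_g eqxx big1 ?addr0 // => p /andP[/eqP <- pg].
by rewrite (negbTE pg).
Qed.

Lemma reroute_feasible (m : I -> R) (z : P -> R) :
  feasible od m z -> feasible od m (reroute z).
Proof.
move=> [z0 zs]; split=> [p|i].
  by rewrite addr_ge0 //; case: ifP => // _; exact: sumr_ge0.
rewrite /reroute big_split /= sum_reroute_extra -(zs i) [RHS](bigID bad_path) /= addrC.
congr (_ + _); first by apply: eq_bigl => p; rewrite andbC.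
rewrite [RHS]big_mkcond [LHS]big_mkcond; apply: eq_bigr => p _.
by case: (od p == i); case: (bad_path p).
Qed.

Lemma load_reroute_bad (z : P -> R) e : Bad e -> load (reroute z) e = 0.
Proof.
move=> be; rewrite /load big1 // => p ep; rewrite /reroute.
have -> : bad_path p by apply/hasP; exists e.
rewrite add0r; case: eqP => // pg; rewrite pg in ep.
by have := g_avoids ep; rewrite be.
Qed.

Lemma load_reroute_le (z : P -> R) e : (forall p, 0 <= z p) ->
  load (reroute z) e <= load z e + \sum_(p | bad_path p) z p.
Proof.
move=> z0; rewrite /load /reroute big_split /=; apply: lerD.
  by apply: ler_sum => p _; case: ifP.
apply: (@le_trans _ _ (\sum_p (if p == g (od p) then bad_flow z (od p) else 0))).
  rewrite [leRHS](bigID (fun p => e \in path_of p)) /= lerDl.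
  by apply: sumr_ge0 => p _; case: ifP => // _; exact: sumr_ge0.
rewrite (partition_big od xpredT) //= [leRHS](partition_big od xpredT) //=.
by apply: ler_sum => i _; rewrite sum_reroute_extra /bad_flow; under eq_bigl do rewrite andbC.
Qed.

End Reroute.

End Flows.

Section Routing.
Variables (E I P : finType) (od : P -> I) (path_of : P -> seq E).

Definition routing_within (r : E -> nat) (n : nat) (g : I -> P) :=
  (forall i, od (g i) = i) /\ (forall i e, e \in path_of (g i) -> (r e <= n)%N).

Definition routable (r : E -> nat) (n : nat) :=
  [forall i, [exists p, (od p == i) && all (fun e => r e <= n)%N (path_of p)]].

Lemma routableP r n : reflect (exists g, routing_within r n g) (routable r n).
Proof.
apply: (iffP forallP) => [rn|[g [od_g g_le]] i]; last first.
  by apply/existsP; exists (g i); rewrite od_g eqxx; apply/allP => e /g_le.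
have /fin_all_exists[g gP] :
    forall i, exists p, (od p == i) && all (fun e => r e <= n)%N (path_of p).
  by move=> i; apply/existsP.
by exists g; split=> [i|i e]; have /andP[/eqP ? /allP ?] := gP i; auto.
Qed.

Lemma exists_critical_rank r : (forall i, exists p, od p = i) ->
  ~ (exists g, routing_within r 0 g) ->
  exists n, (exists g, routing_within r n.+1 g) /\
    exists i, forall p, od p = i -> exists2 e, e \in path_of p & (n < r e)%N.
Proof.
move=> od_surj /routableP r0; have [|n rn nmin] := @ex_minnP (routable r).
  exists (\max_e r e); apply/forallP => i; have [p <-] := od_surj i.
  by apply/existsP; exists p; rewrite eqxx; apply/allP => e _; exact: leq_bigmax.
case: n rn nmin r0 => [-> //|n rn nmin _]; exists n; split; first exact/routableP.
have /forallPn[i /existsPn ni] : ~~ routable r n by apply/negP => /nmin; rewrite ltnn.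
exists i => p odp; move: (ni p); rewrite odp eqxx /= => /allPn[e ep].
by rewrite -ltnNge; exists e.
Qed.

End Routing.

Section Scaling.
Variables (R : realType) (E I P : finType) (od : P -> I) (path_of : P -> seq E)
  (c : E -> {poly R}) (lam : I -> R).
Hypothesis path_uniq : forall p, uniq (path_of p).
Hypothesis od_surj : forall i, exists p, od p = i.
Hypothesis cost_ge0 : forall e (x : R), 0 <= x -> 0 <= (c e).[x].
Hypothesis cost_mono : forall e (x y : R), 0 <= x -> x <= y -> (c e).[x] <= (c e).[y].
Hypothesis lam_gt0 : forall i, 0 < lam i.
Hypothesis lam_sum1 : \sum_i lam i = 1.
Variable y : R -> P -> R.
Hypothesis y_wardrop : forall M, 0 < M -> wardrop od path_of c (fun i => lam i * M) (y M).

Local Notation feas M := (feasible od (fun i => lam i * M)).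
Local Notation load := (load path_of).
Local Notation L := (social_cost path_of c).

Lemma load_le_scale M f e : feas M f -> load f e <= M.
Proof.
move=> fM; rewrite -[M]mul1r -lam_sum1 mulr_suml -(sum_feasible fM).
by apply: load_le_sum; case: fM.
Qed.

Lemma PoA_cvg1 (F : set_system R) {FF : Filter F} (h : R -> R) c0 : 0 < c0 ->
  (\forall M \near F, 0 < M) -> (\forall M \near F, 0 < h M) ->
  (\forall M \near F, forall z, feas M z -> c0 * h M <= L z) ->
  (forall th, 0 < th -> th <= 1 ->
    \forall M \near F, forall z, feas M z -> L (y M) <= L z + th * h M) ->
  PoA od path_of c (fun i => lam i * M) (y M) @[M --> F] --> (1 : R).
Proof.
move=> c00 F0 h0 lower upper; apply/cvgrPdist_le => eps eps0.
set th := Num.min (eps * c0) 1.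
have th0 : 0 < th by rewrite lt_min mulr_gt0 // ltr01.
have th_eps : th <= eps * c0 by rewrite ge_min lexx.
near=> M; have M0 : 0 < M by near: M.
have hM0 : 0 < h M by near: M.
have yf : feas M (y M) := (y_wardrop M0).1.
have Opt_lower : c0 * h M <= Opt od path_of c (fun i => lam i * M).
  by apply: Opt_ge yf _; near: M.
have Opt_near : L (y M) - th * h M <= Opt od path_of c (fun i => lam i * M).
  apply: Opt_ge yf _ => z zf; rewrite lerBlDr; move: z zf.
  by near: M; apply: upper; rewrite // ge_min lexx orbT.
have Opt_upper := Opt_le path_of cost_ge0 yf.
have Opt0 : 0 < Opt od path_of c (fun i => lam i * M).
  exact: lt_le_trans (mulr_gt0 c00 hM0) Opt_lower.
rewrite /PoA Opt0 distrC ger0_norm; last by rewrite subr_ge0 ler_pdivlMr // mul1r.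
rewrite lerBlDl ler_pdivrMr // mulrDl mul1r.
have := ler_wpM2r (ltW hM0) th_eps.
have : eps * c0 * h M <= eps * Opt od path_of c (fun i => lam i * M).
  by rewrite -mulrA; apply: ler_wpM2l; [exact: ltW | exact: Opt_lower].
lra.
Unshelve. all: by end_near.
Qed.

Lemma card_paths_gt0 : (0 < #|P|)%N.
Proof.
case: (pickP (@predT I)) => [i _|noI]; first by have [p _] := od_surj i; apply/card_gt0P; exists p.
have := lam_sum1; rewrite big1 => [/eqP|i _]; [by rewrite eq_sym oner_eq0 | by have := noI i].
Qed.

Section Asymptotic.
Variables (F : set_system R) (rank : E -> nat) (n k : nat) (a : E -> R) (g : I -> P).
Context {FF : Filter F}.
Hypothesis g_routing : routing_within od path_of rank n.+1 g.
Hypothesis rank_barrier :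
  exists i, forall p, od p = i -> exists2 e, e \in path_of p & (n < rank e)%N.
Hypothesis a_gt0 : forall e, rank e = n.+1 -> 0 < a e.
Hypothesis F_gt0 : \forall M \near F, 0 < M.
Hypothesis cost_dominant : forall eta, 0 < eta -> \forall M \near F, forall e x,
  rank e = n.+1 -> 0 <= x -> x <= M -> `|(c e).[x] - a e * x ^+ k| <= eta * M ^+ k.
Hypothesis cost_negligible : forall eta, 0 < eta -> \forall M \near F, forall e x,
  (rank e <= n)%N -> 0 <= x -> x <= M -> (c e).[x] <= eta * M ^+ k.
Hypothesis cost_steep : forall d K, 0 < d -> d <= 1 ->
  \forall M \near F, forall e, (n.+1 < rank e)%N -> K * M ^+ k <= (c e).[d * M].

Local Notation steep := (fun e => (n.+1 < rank e)%N).
Local Notation asum := (\sum_e (if rank e == n.+1 then a e else 0)).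

Definition hom_cost (f : P -> R) := \sum_e (if rank e == n.+1 then a e * load f e ^+ k.+1 else 0).

Lemma g_nonsteep i e : e \in path_of (g i) -> ~~ steep e.
Proof. by move/(g_routing.2 i e); rewrite leqNgt. Qed.

Lemma young_hom_cost (z w : P -> R) : (forall p, 0 <= z p) -> (forall p, 0 <= w p) ->
  k.+1%:R * \sum_e (if rank e == n.+1 then a e * (load z e * load w e ^+ k) else 0)
    <= hom_cost z + k%:R * hom_cost w.
Proof.
move=> z0 w0; rewrite /hom_cost !mulr_sumr -big_split /=; apply: ler_sum => e _.
case: eqP => [/a_gt0 ae|_]; last by rewrite !mulr0 addr0.
rewrite mulrCA [k%:R * _]mulrCA -mulrDr; apply: ler_wpM2l; first exact: ltW.
exact: young_exprS (load_ge0 path_of z0 e) (load_ge0 path_of w0 e).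
Qed.

Lemma hom_cost_reroute M z : feas M z ->
  hom_cost (reroute od path_of steep g z)
    <= hom_cost z + asum * (k.+1%:R * M ^+ k * \sum_(p | bad_path path_of steep p) z p).
Proof.
move=> zf; have [z0 _] := zf.
have [z'0 _] := reroute_feasible path_of steep g_routing.1 zf.
rewrite /hom_cost mulr_suml -big_split /=; apply: ler_sum => e _.
case: eqP => [/a_gt0 ae|_]; last by rewrite mul0r addr0.
rewrite -mulrDr; apply: ler_wpM2l; first exact: ltW.
apply: exprS_le_increment; rewrite ?load_ge0 ?sumr_ge0 //.
- exact: load_le_scale (reroute_feasible path_of steep g_routing.1 zf).
- by apply: load_reroute_le; [exact: g_routing.1 | exact: z0].
Qed.

Section FixedScale.
Variables (M eta : R).
Hypotheses (M_gt0 : 0 < M) (eta_ge0 : 0 <= eta).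
Hypothesis dominant_M : forall e x,
  rank e = n.+1 -> 0 <= x -> x <= M -> `|(c e).[x] - a e * x ^+ k| <= eta * M ^+ k.
Hypothesis negligible_M : forall e x,
  (rank e <= n)%N -> 0 <= x -> x <= M -> (c e).[x] <= eta * M ^+ k.

Lemma mul_eta_le x : 0 <= x -> x <= M -> x * (eta * M ^+ k) <= eta * M ^+ k.+1.
Proof.
move=> x0 xM; rewrite exprS mulrCA; apply: ler_wpM2l => //.
by apply: ler_wpM2r => //; exact: exprn_ge0 (ltW M_gt0).
Qed.

Lemma hom_cost_le_cost f : feas M f -> hom_cost f <= L f + #|E|%:R * (eta * M ^+ k.+1).
Proof.
move=> ff; have [f0 _] := ff; rewrite -sumr_const_card /social_cost -big_split /=.
apply: ler_sum => e _; have x0 := load_ge0 path_of f0 e; have xM := load_le_scale e ff.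
have := mul_eta_le x0 xM; have := cost_ge0 e x0.
case: eqP => [/dominant_M/(_ x0 xM)|_ cx0 exM]; last first.
  by rewrite addr_ge0 ?mulr_ge0 // exprn_ge0 // ltW.
rewrite ler_norml => /andP[lo _] cx0 exM; have := ler_wpM2l x0 lo.
rewrite [load f e ^+ k.+1]exprS; lra.
Qed.

Lemma mul_cost_le e w x : ~~ steep e -> 0 <= w -> w <= M -> 0 <= x -> x <= M ->
  w * (c e).[x] <= (if rank e == n.+1 then a e * (w * x ^+ k) else 0) + eta * M ^+ k.+1.
Proof.
move=> ns w0 wM x0 xM; have := mul_eta_le w0 wM.
case: eqP => [/dominant_M/(_ x0 xM)|ne].
  by rewrite ler_norml => /andP[_ hi]; have := ler_wpM2l w0 hi; lra.
have rn : (rank e <= n)%N by move: ns ne; rewrite -leqNgt; lia.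
by have := ler_wpM2l w0 (negligible_M rn x0 xM); lra.
Qed.

Lemma cost_eq_le_pairing z : feas M z -> (forall e, steep e -> load z e = 0) ->
  L (y M) <= \sum_e (if rank e == n.+1 then a e * (load z e * load (y M) e ^+ k) else 0)
    + #|E|%:R * (eta * M ^+ k.+1).
Proof.
move=> zf zsteep; have [z0 _] := zf; have yf := (y_wardrop M_gt0).1.
apply: le_trans (wardrop_social_cost_le path_uniq _ (y_wardrop M_gt0) zf) _.
  by move=> i; exact: mulr_gt0.
rewrite -sumr_const_card -big_split /=; apply: ler_sum => e _.
have [se|ns] := boolP (steep e); last first.
  apply: mul_cost_le => //.
  - exact: (load_ge0 path_of z0 e).
  - exact: load_le_scale zf.
  - exact: (load_ge0 path_of yf.1 e).
  - exact: load_le_scale yf.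
by rewrite zsteep // !(mul0r, mulr0) if_same add0r mulr_ge0 // exprn_ge0 // ltW.
Qed.

Lemma eq_cost_le_small_steep_flow z d : feas M z ->
  \sum_(p | bad_path path_of steep p) z p <= d * M ->
  L (y M) <= L z + (2 * k.+1%:R * #|E|%:R * eta + asum * k.+1%:R * d) * M ^+ k.+1.
Proof.
move=> zf small; have [z0 _] := zf; have yf := (y_wardrop M_gt0).1.
have z'f := reroute_feasible path_of steep g_routing.1 zf.
have pairing := cost_eq_le_pairing z'f (load_reroute_bad od g_nonsteep z).
have young := young_hom_cost z'f.1 yf.1.
have hy := hom_cost_le_cost yf; have hz := hom_cost_le_cost zf; have hr := hom_cost_reroute zf.
have asum0 : 0 <= asum by apply: sumr_ge0 => e _; case: eqP => // /a_gt0/ltW.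
have steep_part : asum * (k.+1%:R * M ^+ k * \sum_(p | bad_path path_of steep p) z p)
    <= asum * k.+1%:R * d * M ^+ k.+1.
  have -> : asum * k.+1%:R * d * M ^+ k.+1 = asum * (k.+1%:R * M ^+ k * (d * M)).
    by rewrite exprS; ring.
  apply: ler_wpM2l => //; apply: ler_wpM2l => //.
  by rewrite mulr_ge0 // exprn_ge0 // ltW.
have := ler_wpM2l (ler0n R k.+1) pairing; have := ler_wpM2l (ler0n R k) hy.
move: young steep_part; rewrite -!natr1; lra.
Qed.

End FixedScale.

Lemma social_cost_ge_pow :
  exists2 c0, 0 < c0 & \forall M \near F, forall z, feas M z -> c0 * M ^+ k.+1 <= L z.
Proof.
have [i barrier] := rank_barrier; have [p0 p0i] := od_surj i.
have P1 : 1 <= #|P|%:R :> R by rewrite ler1n card_paths_gt0.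
set rho := lam i / #|P|%:R.
have rho0 : 0 < rho by rewrite divr_gt0 ?lam_gt0 // (lt_le_trans ltr01).
have rho1 : rho <= 1.
  rewrite ler_pdivrMr ?(lt_le_trans ltr01) // mul1r (le_trans _ P1) //.
  by rewrite -lam_sum1 (bigD1 i) //= lerDl sumr_ge0 // => j _; exact: ltW.
set amin := \big[Num.min/1]_(e | rank e == n.+1) a e.
have amin0 : 0 < amin.
  by elim/big_ind: amin => [|u v u0 v0|e /eqP/a_gt0] //; rewrite lt_min u0 v0.
set b := amin * rho ^+ k / 2.
have b0 : 0 < b by rewrite divr_gt0 // mulr_gt0 // exprn_gt0.
exists (rho * b); first exact: mulr_gt0.
near=> M; have M0 : 0 < M by near: M.
have steepM e : (n.+1 < rank e)%N -> b * M ^+ k <= (c e).[rho * M].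
  by move: e; near: M; exact: cost_steep.
have domM e x : rank e = n.+1 -> 0 <= x -> x <= M ->
    `|(c e).[x] - a e * x ^+ k| <= b * M ^+ k.
  by move: e x; near: M; exact: cost_dominant.
move=> z zf; have rM0 : 0 <= rho * M by rewrite mulr_ge0 ?ltW.
have rMM : rho * M <= M := ler_piMl (ltW M0) rho1.
have [e re le] : exists2 e, (n < rank e)%N & rho * M * (c e).[rho * M] <= L z.
  have p0i' : od p0 == i by rewrite p0i.
  rewrite /rho mulrAC.
  apply: (social_cost_ge_share (Q := fun p => od p == i) cost_ge0 cost_mono zf.1 _ p0i').
  - by move=> p /eqP; exact: barrier.
  - by rewrite mulr_ge0 // ltW.
  - by rewrite (zf.2 i).
have ce : b * M ^+ k <= (c e).[rho * M].
  have [|se|de] := ltngtP (rank e) n.+1; first by rewrite ltnS leqNgt re.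
    exact: steepM.
  have := domM e (rho * M) de rM0 rMM.
  have : amin * (rho ^+ k * M ^+ k) <= a e * (rho * M) ^+ k.
    rewrite [(rho * M) ^+ k]exprMn; apply: ler_wpM2r; first by rewrite mulr_ge0 // exprn_ge0 ?ltW.
    by apply: bigmin_le_cond; rewrite de.
  have eb : amin * (rho ^+ k * M ^+ k) = 2 * (b * M ^+ k) by rewrite /b; field.
  rewrite ler_norml => amin_le /andP[lo _]; lra.
apply: le_trans le; have -> : rho * b * M ^+ k.+1 = rho * M * (b * M ^+ k).
  by rewrite exprS; ring.
exact: ler_wpM2l.
Unshelve. all: by end_near.
Qed.

Lemma steep_flow_cost_ge K d : 0 < d -> d <= 1 -> \forall M \near F, forall z, feas M z ->
  d * M <= \sum_(p | bad_path path_of steep p) z p -> K * M ^+ k.+1 <= L z.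
Proof.
move=> d0 d1; have P1 : 1 <= #|P|%:R :> R by rewrite ler1n card_paths_gt0.
set d' := d / #|P|%:R.
have d'0 : 0 < d' by rewrite divr_gt0 // (lt_le_trans ltr01).
have d'1 : d' <= 1 by rewrite ler_pdivrMr ?(lt_le_trans ltr01) // mul1r (le_trans d1).
near=> M; have M0 : 0 < M by near: M.
have steepM e : steep e -> K / d' * M ^+ k <= (c e).[d' * M].
  by move: e; near: M; exact: cost_steep.
move=> z zf big; have dM0 : 0 < d * M by rewrite mulr_gt0.
have [p0 bp0] : exists p, bad_path path_of steep p.
  apply: contrapT => nb; move: big; rewrite big_pred0 ?leNgt ?dM0 // => p.
  by apply/negP => bp; apply: nb; exists p.
have [e se le] : exists2 e, steep e & d' * M * (c e).[d' * M] <= L z.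
  rewrite /d' mulrAC.
  apply: (social_cost_ge_share (Q := bad_path path_of steep) cost_ge0 cost_mono zf.1 _ bp0).
  - by move=> p /hasP[e ep se]; exists e.
  - exact: ltW.
  - exact: big.
apply: le_trans le; have -> : K * M ^+ k.+1 = d' * M * (K / d' * M ^+ k).
  by rewrite exprS; field; rewrite lt0r_neq0.
by apply: ler_wpM2l; [rewrite mulr_ge0 ?ltW | exact: steepM].
Unshelve. all: by end_near.
Qed.

Lemma eq_cost_le_pow : exists K, \forall M \near F, L (y M) <= K * M ^+ k.+1.
Proof.
exists (asum + #|E|%:R); near=> M; have M0 : 0 < M by near: M.
have domM e x : rank e = n.+1 -> 0 <= x -> x <= M -> `|(c e).[x] - a e * x ^+ k| <= 1 * M ^+ k.
  by move: e x; near: M; exact: cost_dominant.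
have negM e x : (rank e <= n)%N -> 0 <= x -> x <= M -> (c e).[x] <= 1 * M ^+ k.
  by move: e x; near: M; exact: cost_negligible.
have yf := (y_wardrop M0).1; have [y0 _] := yf.
have y'f := reroute_feasible path_of steep g_routing.1 yf.
apply: le_trans (cost_eq_le_pairing M0 ler01 domM negM y'f (load_reroute_bad od g_nonsteep _)) _.
rewrite mul1r mulrDl lerD2r mulr_suml; apply: ler_sum => e _.
case: eqP => [/a_gt0/ltW ae|_]; last by rewrite mul0r.
have x0 := load_ge0 path_of y0 e; have xM := load_le_scale e yf.
apply: ler_wpM2l => //; rewrite exprS; apply: ler_pM; rewrite ?exprn_ge0 //.
- exact: (load_ge0 path_of y'f.1 e).
- exact: load_le_scale y'f.
- by apply: lerXn2r; rewrite ?nnegrE // ltW.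
Unshelve. all: by end_near.
Qed.

Lemma eq_cost_near_opt th : 0 < th -> th <= 1 ->
  \forall M \near F, forall z, feas M z -> L (y M) <= L z + th * M ^+ k.+1.
Proof.
move=> th0 th1.
have share w : 0 <= w -> w * (th / (2 * (w + 1))) <= th / 2.
  move=> w0; have -> : w * (th / (2 * (w + 1))) = th / 2 * (w / (w + 1)).
    by field; rewrite lt0r_neq0 // ltr_wpDl.
  apply: ler_piMr; first by rewrite divr_ge0 // ltW.
  by rewrite ler_pdivrMr ?ltr_wpDl // mul1r lerDl.
have asum0 : 0 <= asum by apply: sumr_ge0 => e _; case: eqP => // /a_gt0/ltW.
pose u := asum * k.+1%:R; pose v : R := 2 * k.+1%:R * #|E|%:R.
have u0 : 0 <= u by rewrite mulr_ge0.
have v0 : 0 <= v by rewrite !mulr_ge0.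
pose d := th / (2 * (u + 1)); pose eta := th / (2 * (v + 1)).
have d0 : 0 < d by rewrite divr_gt0 // mulr_gt0 // ltr_wpDl.
have eta0 : 0 < eta by rewrite divr_gt0 // mulr_gt0 // ltr_wpDl.
have d1 : d <= 1.
  by rewrite ler_pdivrMr ?mulr_gt0 ?ltr_wpDl // mul1r (le_trans th1) // -[1]add0r; nra.
have [K upper] := eq_cost_le_pow.
near=> M; have M0 : 0 < M by near: M.
have domM e x : rank e = n.+1 -> 0 <= x -> x <= M -> `|(c e).[x] - a e * x ^+ k| <= eta * M ^+ k.
  by move: e x; near: M; exact: cost_dominant.
have negM e x : (rank e <= n)%N -> 0 <= x -> x <= M -> (c e).[x] <= eta * M ^+ k.
  by move: e x; near: M; exact: cost_negligible.
have steepM z : feas M z -> d * M <= \sum_(p | bad_path path_of steep p) z p ->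
    K * M ^+ k.+1 <= L z.
  by move: z; near: M; exact: steep_flow_cost_ge.
have eqM : L (y M) <= K * M ^+ k.+1 by near: M.
move=> z zf; have MK0 : 0 <= M ^+ k.+1 by rewrite exprn_ge0 // ltW.
(* Small steep flow is rerouted; large steep flow alone costs more than the equilibrium. *)
have [small|/ltW big] := leP (\sum_(p | bad_path path_of steep p) z p) (d * M).
  apply: le_trans (eq_cost_le_small_steep_flow M0 (ltW eta0) domM negM zf small) _.
  rewrite lerD2l -/u -/v; apply: ler_wpM2r => //.
  by have := share _ u0; have := share _ v0; rewrite -/d -/eta; lra.
have := steepM z zf big; have := mulr_ge0 (ltW th0) MK0.
lra.
Unshelve. all: by end_near.
Qed.

Lemma PoA_cvg1_asymptotic :
  PoA od path_of c (fun i => lam i * M) (y M) @[M --> F] --> (1 : R).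
Proof.
have [c0 c00 lower] := social_cost_ge_pow.
apply: (PoA_cvg1 (h := fun M => M ^+ k.+1) c00 F_gt0 _ lower eq_cost_near_opt).
by apply: filterS F_gt0 => M M0; exact: exprn_gt0.
Qed.

End Asymptotic.

Lemma PoA_eq1_free_routing M g : 0 < M -> routing_within od path_of (fun e => size (c e)) 0 g ->
  PoA od path_of c (fun i => lam i * M) (y M) = 1.
Proof.
move=> M0 [od_g g_free]; have yf := (y_wardrop M0).1.
have g_avoids i e : e \in path_of (g i) -> ~~ (c e != 0).
  by move/g_free; rewrite size_poly_leq0 negbK.
have zf := reroute_feasible path_of (fun e => c e != 0) od_g yf.
have cost0 : L (reroute od path_of (fun e => c e != 0) g (y M)) = 0.
  rewrite /social_cost big1 // => e _.
  have [ce|/negPn/eqP->] := boolP (c e != 0); last by rewrite horner0 mulr0.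
  by rewrite (load_reroute_bad od g_avoids) ?mul0r.
by have := Opt_le path_of cost_ge0 zf; rewrite cost0 /PoA leNgt => /negbTE ->.
Qed.

Lemma PoA_cvg1_free_routing (F : set_system R) {FF : Filter F} :
  (\forall M \near F, 0 < M) -> (exists g, routing_within od path_of (fun e => size (c e)) 0 g) ->
  PoA od path_of c (fun i => lam i * M) (y M) @[M --> F] --> (1 : R).
Proof.
move=> F0 [g free]; apply: cvg_near_cst; apply: filterS F0 => M M0.
exact: PoA_eq1_free_routing free.
Qed.

Lemma PoA_cvg1_pinfty : ~ (exists g, routing_within od path_of (fun e => size (c e)) 0 g) ->
  PoA od path_of c (fun i => lam i * M) (y M) @[M --> +oo] --> (1 : R).
Proof.
move=> not_free; have := exists_critical_rank od_surj not_free.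
move=> [n [[g grout] barrier]].
apply: (PoA_cvg1_asymptotic (k := n) (a := fun e => lead_coef (c e)) grout barrier).
- move=> e se; apply: lead_coef_gt0_nonneg (cost_ge0 e) _.
  by rewrite -size_poly_gt0 se.
- exact: nbhs_pinfty_gt.
- move=> eta eta0; apply: filter_forall => e.
  have [se|ne] := eqVneq (size (c e)) n.+1; last by apply: nearW => M x /eqP; rewrite (negbTE ne).
  by apply: filterS (horner_near_lead_pinfty se eta0) => M ce x _; exact: ce.
- move=> eta eta0; apply: filter_forall => e.
  have [se|ne] := leqP (size (c e)) n; last by apply: nearW => M x.
  apply: filterS (horner_small_pinfty se eta0) => M ce x _ x0 xM.
  exact: le_trans (ler_norm _) (ce x x0 xM).
- move=> d K d0 d1; apply: filter_forall => e.
  have [se|ne] := ltnP n.+1 (size (c e)); last by apply: nearW => M.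
  by apply: filterS (horner_ge_pinfty K (cost_ge0 e) se d0 d1) => M ce _.
Qed.

Lemma PoA_cvg1_0 : ~ (exists g, routing_within od path_of (fun e => size (c e)) 0 g) ->
  PoA od path_of c (fun i => lam i * M) (y M) @[M --> 0^'+] --> (1 : R).
Proof.
move=> not_free; pose N := (\max_e size (c e))%N.
(* Near 0 a cost is steeper the lower its order of vanishing, hence the reversal. *)
pose rank e := if c e == 0 then 0%N else (N - coef_order (c e))%N.
have order_lt e : c e != 0 -> (coef_order (c e) < N)%N.
  by move=> ce; have [_ _ os] := coef_orderP ce; exact: leq_trans os (leq_bigmax e).
have not_free_rank : ~ (exists g, routing_within od path_of rank 0 g).
  move=> [g [od_g g0]]; apply: not_free; exists g; split => // i e /g0.
  rewrite /rank; case: eqP => [->|/eqP ce]; first by rewrite size_poly0.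
  by have := order_lt e ce; lia.
have [n [[g grout] [i barrier]]] :=
  exists_critical_rank od_surj not_free_rank.
have nN : (n < N)%N.
  have [p /barrier[e _]] := od_surj i; rewrite /rank; case: eqP => // /eqP ce; lia.
pose k := (N - n.+1)%N.
have rank_dom e : rank e = n.+1 -> c e != 0 /\ coef_order (c e) = k.
  rewrite /rank /k; case: eqP => // /eqP ce; have := order_lt e ce; split => //; lia.
have rank_neg e : (rank e <= n)%N -> forall j, (j < k.+1)%N -> (c e)`_j = 0.
  rewrite /rank /k; case: eqP => [-> _ j _|/eqP ce re j jk]; first by rewrite coef0.
  by have [_ low _] := coef_orderP ce; apply: low; lia.
have rank_steep e : (n.+1 < rank e)%N -> c e != 0 /\ (coef_order (c e) < k)%N.
  by rewrite /rank /k; case: eqP => // /eqP ce; split => //; lia.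
apply: (PoA_cvg1_asymptotic (k := k) (a := fun e => (c e)`_k) grout (ex_intro _ i barrier)).
- by move=> e /rank_dom[ce ok] /=; rewrite -ok; exact: coef_order_gt0_nonneg (cost_ge0 e) ce.
- exact: nbhs_right_gt.
- move=> eta eta0; apply: filter_forall => e.
  have [/rank_dom[ce ok]|ne] := eqVneq (rank e) n.+1; last first.
    by apply: nearW => M x /eqP; rewrite (negbTE ne).
  have [_ low _] := coef_orderP ce; rewrite ok in low.
  by apply: filterS (horner_near_low_0 low eta0) => M ce' x _; exact: ce'.
- move=> eta eta0; apply: filter_forall => e.
  have [/rank_neg low|ne] := leqP (rank e) n; last by apply: nearW => M x.
  apply: filterS (horner_small_0 low eta0) => M ce x _ x0 xM.
  exact: le_trans (ler_norm _) (ce x x0 xM).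
- move=> d K d0 d1; apply: filter_forall => e.
  have [/rank_steep[ce ok]|ne] := ltnP n.+1 (rank e); last by apply: nearW => M.
  by apply: filterS (horner_ge_0 K (cost_ge0 e) ce ok d0 d1) => M ce' _.
Qed.

End Scaling.

Lemma simple_path_uniq (V E : finType) (src tgt : E -> V) (o d : V) (s : seq E) :
  is_simple_path src tgt o d s -> uniq s.
Proof.
case: s => // e0 s /and4P[_ _ _].
by rewrite cons_uniq => /andP[_ /map_uniq].
Qed.

Unset Implicit Arguments.

Theorem corollary5p5 (R : realType) (V E : finType) (src tgt : E -> V)
  (I : finType) (orig dest : I -> V)
  (P : finType) (od : P -> I) (path_of : P -> seq E)
  (Hpath : forall p, is_simple_path src tgt (orig (od p)) (dest (od p)) (path_of p))
  (Hinj : injective path_of)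
  (Hne : forall i, exists p, od p = i)
  (c : E -> {poly R})
  (Hc0 : forall e (x : R), 0 <= x -> 0 <= (c e).[x])
  (Hcmono : forall e (x y : R), 0 <= x -> x <= y -> (c e).[x] <= (c e).[y])
  (lam : I -> R) (Hlam : forall i, 0 < lam i) (Hlam1 : \sum_i lam i = 1)
  (feq : R -> P -> R)
  (Hfeq : forall M : R, 0 < M -> wardrop od path_of c (fun i => lam i * M) (feq M)) :
  (PoA od path_of c (fun i => lam i * M) (feq M) @[M --> 0^'+] --> (1 : R)) /\
  (PoA od path_of c (fun i => lam i * M) (feq M) @[M --> +oo] --> (1 : R)).
Proof.
have path_uniq p : uniq (path_of p) := simple_path_uniq (Hpath p).
have [free|not_free] := pselect (exists g, routing_within od path_of (fun e => size (c e)) 0 g).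
  by split; apply: PoA_cvg1_free_routing => //; [exact: nbhs_right_gt | exact: nbhs_pinfty_gt].
by split; [apply: PoA_cvg1_0 | apply: PoA_cvg1_pinfty].
Qed.
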